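(* Let $m\ge3$ be odd, let $s$ be an even positive integer not divisible by $4$, $n=sm$, and $\Gamma=C_n[mK_1]$. Define $$\eta_1=(t,t,\dots,t)r,\qquad \eta_2=(\gamma_1,\gamma_2,\dots,\gamma_n)z,\qquad H=\langle\eta_1,\eta_2\rangle,$$ where $\gamma_{2i+1}=\gamma_{2i+2}=tc^{i}$ for $0\le i<n/2$ (so $\eta_2=(t,t,tc,tc,tc^2,tc^2,\dots,tc^{-1},tc^{-1})z$). Then $\eta_1$ has order $n$, $\eta_2$ has order $2m$, $\eta_1\eta_2$ has order $2$, and $|H|=2m^2n$.
   Context: $C_n[mK_1]$ is the graph with vertex set $\{1,\dots,n\}\times\{1,\dots,m\}$ in which $(i_1,j_1)$ is adjacent to $(i_2,j_2)$ if and only if $i_1\equiv i_2\pm1\pmod n$ (residues mod $n$ taken in $\{1,\dots,n\}$). Permutations act on the right ($x\alpha$ is the image of $x$) and products are composed left to right, both in $S_m$ and in $\mathrm{Aut}(\Gamma)$. For $\alpha_1,\dots,\alpha_n\in S_m$ and a permutation $x$ of $\{1,\dots,n\}$ in the dihedral group $D_n=\langle r,z\rangle$, $(\alpha_1,\dots,\alpha_n)x$ denotes the automorphism of $\Gamma$ mapping $(i,j)\mapsto(ix,\,j\alpha_i)$; $1$ denotes an identity permutation. Here $c=(1\,2\,\cdots\,m)\in S_m$; $t\in S_m$ fixes $1$ and maps $j\mapsto m-j+2$ for $2\le j\le m$; $r$ is the permutation $i\mapsto i+1 \pmod n$ of $\{1,\dots,n\}$; and $z$ fixes $1$ and maps $j\mapsto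 n-j+2$ for $2\le j\le n$. *)

(* Vertices of C_n[mK_1] are encoded 0-indexed as 'I_n * 'I_m:
   the paper's vertex (i,j) is (i-1, j-1). *)
From mathcomp Require Import all_boot all_order all_fingroup.
From mathcomp Require Import zify.
Set Implicit Arguments. Unset Strict Implicit. Unset Printing Implicit Defensive.

Definition cadj (n m : nat) (u v : 'I_n * 'I_m) : bool :=
  (v.1 == ordS u.1) || (u.1 == ordS v.1).

(* j |-> (k - j) mod k, 0-indexed; this is t on {1..m} and z on {1..n}. *)
Fact modneg_subproof k (j : 'I_k) : (k - j) %% k < k.
Proof. by apply: ltn_pmod; apply: leq_ltn_trans (ltn_ord j). Qed.
Definition modneg k (j : 'I_k) : 'I_k := Ordinal (modneg_subproof j).

Lemma modnegK k : involutive (@modneg k).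
Proof.
move=> j; apply: val_inj => /=; have := ltn_ord j.
case: (posnP j) => [-> | jp] jk.
  by rewrite subn0 modnn subn0 modnn.
by rewrite (modn_small (_ : k - j < k)) ?subKn ?modn_small //; lia.
Qed.

Lemma modneg_inj k : injective (@modneg k).
Proof. exact: inv_inj (@modnegK k). Qed.

Definition cperm m : {perm 'I_m} := perm (@ordS_inj m).
Definition tperm' m : {perm 'I_m} := perm (@modneg_inj m).
Definition rperm n : {perm 'I_n} := perm (@ordS_inj n).
Definition zperm n : {perm 'I_n} := perm (@modneg_inj n).

Definition wr_fun n m (a : 'I_n -> {perm 'I_m}) (x : {perm 'I_n})
  (v : 'I_n * 'I_m) : 'I_n * 'I_m := (x v.1, a v.1 v.2).

Lemma wr_fun_inj n m a x : injective (@wr_fun n m a x).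
Proof.
move=> [i j] [i' j'] [] /perm_inj eii; subst i' => /perm_inj -> //.
Qed.

Definition wr n m a x : {perm 'I_n * 'I_m} := perm (@wr_fun_inj n m a x).

Definition eta1 n m : {perm 'I_n * 'I_m} := wr (fun _ => tperm' m) (rperm n).

(* eta_2 = (gamma_1,...,gamma_n) z with gamma_{2i+1} = gamma_{2i+2} = t c^i;
   0-indexed position k carries t c^(k %/ 2).  Products in {perm _} compose
   left to right, as in the paper. *)
Definition eta2 n m : {perm 'I_n * 'I_m} :=
  wr (fun k : 'I_n => (tperm' m * cperm m ^+ (k %/ 2))%g) (zperm n).

(* Number the vertices from 0, so that they form Z_n x Z_m.  Then
   eta1 (i, j) = (i + 1, -j) and eta2 (i, j) = (-i, h i - j) with h i = floor(i/2)
   mod m, and as m | n the shears (i, j) |-> (i, j + a + b i), (a, b) in Z_m^2,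
   form a group N of order m^2 normalised by eta1 and eta2.  The arithmetic of h
   (this is where m | n/2 is used) gives eta2^2 = (shear by (0, -1)) and
   (eta1 eta2)^2 = 1, so modulo N the generators satisfy the relations of the
   dihedral group of order 2n.  Hence every element of H is eta1^k eta2^e s with
   k < n, e in {0, 1}, s in N, and reading off first coordinates shows that this
   decomposition is unique: |H| = 2 m^2 n.  The orders follow from the same
   coordinate formulas. *)

From mathcomp Require Import all_boot all_order all_fingroup all_algebra.
From mathcomp Require Import cyclic ring zify.
Set Implicit Arguments. Unset Strict Implicit. Unset Printing Implicit Defensive.
Import GRing.Theory.

Lemma gen_subset_mulr_closed (gT : finGroupType) (A S : {set gT}) :
  1%g \in S -> (forall x a, x \in S -> a \in A -> (x * a)%g \in S) ->
  <<A>>%g \subset S.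
Proof.
move=> S1 SA; apply/subsetP => _ /gen_prodgP[k [c cA ->]].
elim: k c cA => [|k IHk] c cA; first by rewrite big_ord0.
by rewrite big_ord_recr SA // IHk.
Qed.

Section ZpArith.
Variable p : nat.
Local Notation m := p.+2.
Local Open Scope ring_scope.

Lemma val_natZp k : val (k%:R : 'I_m) = (k %% m)%N.
Proof. exact: (@val_Zp_nat m isT). Qed.

Lemma natZp_eq0 k : ((k%:R : 'I_m) == 0) = (m %| k)%N.
Proof. by rewrite -val_eqE val_natZp. Qed.

Lemma natZp_char : (m%:R : 'I_m) = 0.
Proof. by apply/eqP; rewrite natZp_eq0. Qed.

Lemma natZp_mod N k : (m %| N)%N -> ((k %% N)%:R : 'I_m) = k%:R.
Proof. by move=> mN; apply: val_inj; rewrite !val_natZp modn_dvdm. Qed.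

Lemma ordSZp (j : 'I_m) : ordS j = j + 1.
Proof. by rewrite (add_Zp_1 (p := m)). Qed.

Lemma modnegZp (j : 'I_m) : modneg j = - j.
Proof. exact: val_inj. Qed.

Lemma signZp_inj : (0 < p)%N -> injective (fun e : bool => (-1) ^+ e : 'I_m).
Proof.
move=> p0 [] [] // /(congr1 val) /=; rewrite !modn_small //; lia.
Qed.

End ZpArith.

Section Eta.
Variables p q : nat.
Local Notation m := p.+2.
Local Notation n := q.+2.
Local Open Scope ring_scope.
Hypothesis n_even : (2 %| n)%N.
Hypothesis m_dvd_half : (m %| n %/ 2)%N.

Fact q_gt0 : (0 < q)%N.
Proof. by case: q m_dvd_half. Qed.

Lemma m_dvd_n : (m %| n)%N.
Proof. by rewrite -(divnK n_even) dvdn_mulr. Qed.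

Definition resZp (x : 'I_n) : 'I_m := (val x)%:R.

Lemma resZp0 : resZp 0 = 0. Proof. by []. Qed.

Lemma resZp1 : resZp 1 = 1.
Proof. by rewrite /resZp /= modn_small. Qed.

Lemma resZpD x y : resZp (x + y) = resZp x + resZp y.
Proof. by rewrite /resZp /= natZp_mod ?m_dvd_n // natrD. Qed.

Lemma resZpN x : resZp (- x) = - resZp x.
Proof. by apply/eqP; rewrite -addr_eq0 -resZpD addNr. Qed.

(* The exponent of c in gamma at the 0-indexed position x. *)
Definition halfZp (x : 'I_n) : 'I_m := (val x %/ 2)%:R.

Lemma half_n_eq0 : ((n %/ 2)%:R : 'I_m) = 0.
Proof. by apply/eqP; rewrite natZp_eq0. Qed.

Lemma halfZpN x : halfZp (- x) = halfZp x - resZp x.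
Proof.
apply/eqP; rewrite eq_sym subr_eq /halfZp /resZp /=.
have := ltn_ord x; case: (posnP x) => [-> | x_gt0 x_lt_n].
  by rewrite subn0 modnn div0n add0r.
rewrite modn_small; last by lia.
rewrite -natrD (_ : ((n - x) %/ 2 + x = n %/ 2 + x %/ 2)%N); last by lia.
by rewrite natrD half_n_eq0 add0r.
Qed.

Lemma halfZpS x : halfZp (x + 1) = resZp x - halfZp x.
Proof.
apply/eqP; rewrite eq_sym subr_eq /halfZp /resZp /=.
have := ltn_ord x; rewrite [(1 %% n)%N]modn_small // addn1.
case: (ltnP x.+1 n) => [x1_lt_n _ | n_le_x1 x_lt_n].
  by rewrite modn_small // -natrD; apply/eqP; congr _%:R; lia.
rewrite (_ : x.+1 = n) ?modnn; last by lia.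
rewrite div0n add0r -(inj_eq (addIr 1)) !natr1.
have -> : x.+1 = n by lia.
have -> : (x %/ 2).+1 = (n %/ 2)%N by lia.
by rewrite half_n_eq0 natZp_eq0 m_dvd_n.
Qed.

Local Notation V := ('I_n * 'I_m)%type.
Local Notation e1 := (eta1 n m).
Local Notation e2 := (eta2 n m).

Lemma eta1E v : e1 v = (v.1 + 1, - v.2).
Proof. by rewrite !permE /wr_fun !permE ordSZp modnegZp. Qed.

Lemma cpermX k (j : 'I_m) : (cperm m ^+ k)%g j = j + k%:R.
Proof.
elim: k => [|k IHk]; first by rewrite expg0 perm1 addr0.
by rewrite expgSr permM IHk permE ordSZp mulrSr addrA.
Qed.

Lemma eta2E v : e2 v = (- v.1, halfZp v.1 - v.2).
Proof.
by rewrite !permE /wr_fun permE modnegZp permM permE modnegZp cpermX addrC.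
Qed.

Lemma eta1X k v : (e1 ^+ k)%g v = (v.1 + k%:R, (-1) ^+ k * v.2).
Proof.
elim: k => [|k IHk]; first by rewrite expg0 perm1 expr0 mul1r addr0; case: v.
by rewrite expgSr permM IHk eta1E /= mulrSr addrA exprS mulN1r mulNr.
Qed.

Lemma eta2X_fst k v : ((e2 ^+ k)%g v).1 = (-1) ^+ k * v.1.
Proof.
elim: k => [|k IHk]; first by rewrite expg0 perm1 expr0 mul1r.
by rewrite expgSr permM eta2E /= IHk exprS mulN1r mulNr.
Qed.

Definition shear_fun (a b : 'I_m) (v : V) : V := (v.1, v.2 + (a + b * resZp v.1)).

Lemma shear_fun_inj a b : injective (shear_fun a b).
Proof.
move=> [i j] [i' j'] eq_v; have /= eq_i := congr1 fst eq_v.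
by have /= := congr1 snd eq_v; rewrite eq_i => /addIr ->.
Qed.

Definition shear a b : {perm V} := perm (@shear_fun_inj a b).
(* Otherwise [shear 0 1] inside [%g] would read 1 as the unit of the additive
   group 'I_m, i.e. as 0. *)
Arguments shear (a b)%_R.

Lemma shearE a b v : shear a b v = (v.1, v.2 + (a + b * resZp v.1)).
Proof. exact: permE. Qed.

Lemma shearM a b c d : (shear a b * shear c d)%g = shear (a + c) (b + d).
Proof. by apply/permP => v; rewrite permM !shearE /=; congr (_, _); ring. Qed.

Lemma shear00 : shear 0 0 = 1%g.
Proof. by apply/permP => v; rewrite shearE perm1 mul0r !addr0; case: v. Qed.

Lemma shearV a b : (shear a b)^-1%g = shear (- a) (- b).
Proof. by apply/eqP; rewrite eq_invg_mul shearM !subrr shear00. Qed.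

Lemma shearX a b k : (shear a b ^+ k)%g = shear (a *+ k) (b *+ k).
Proof.
elim: k => [|k IHk]; first by rewrite expg0 !mulr0n shear00.
by rewrite expgSr IHk shearM -!mulrSr.
Qed.

Lemma shear_inj a b a' b' : shear a b = shear a' b' -> a = a' /\ b = b'.
Proof.
move=> eq_ab; have := congr1 (fun f : {perm V} => (f (0, 0)).2) eq_ab.
have := congr1 (fun f : {perm V} => (f (1, 0)).2) eq_ab.
rewrite /= !shearE /= resZp0 resZp1 !mulr0 !mulr1 !addr0 !add0r => eq_ab1 eq_a.
by rewrite eq_a in eq_ab1; split; last exact: addrI eq_ab1.
Qed.

Lemma eta1_expn : (e1 ^+ n)%g = 1%g.
Proof.
have n_odd : odd n = false by apply/negbTE; rewrite -dvdn2.
apply/permP => v; rewrite eta1X perm1 natZp_char addr0 -signr_odd n_odd mul1r.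
by case: v.
Qed.

Lemma eta2_sqr : (e2 ^+ 2)%g = shear 0 (-1).
Proof.
apply/permP => v; rewrite expgS expg1 permM !eta2E shearE /= halfZpN opprK.
by congr (_, _); ring.
Qed.

Lemma eta1_eta2_sqr : ((e1 * e2) ^+ 2)%g = 1%g.
Proof.
apply/permP => -[i j]; rewrite expgS expg1 !permM !eta1E !eta2E perm1 /=.
rewrite (_ : - (i + 1) + 1 = - i); last by ring.
by rewrite opprK halfZpN halfZpS; congr (_, _); ring.
Qed.

Lemma shear_eta1 a b : (shear a b * e1)%g = (e1 * shear (b - a) (- b))%g.
Proof.
apply/permP => v; rewrite !permM !shearE !eta1E /= resZpD resZp1.
by congr (_, _); ring.
Qed.

Lemma shear_eta2 a b : (shear a b * e2)%g = (e2 * shear (- a) b)%g.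
Proof.
apply/permP => v; rewrite !permM !shearE !eta2E /= resZpN.
by congr (_, _); ring.
Qed.

Lemma eta2_eta1 : (e2 * e1)%g = (e1 ^+ q.+1 * e2 * shear 0 1)%g.
Proof.
have e1V : (e1^-1)%g = (e1 ^+ q.+1)%g.
  by apply/eqP; rewrite eq_invg_mul -expgS eta1_expn.
have e2V : (e2^-1)%g = (e2 * shear 0 1)%g.
  apply/eqP; rewrite eq_invg_mul mulgA -{1}[e2]expg1 -expgSr eta2_sqr.
  by rewrite shearM addr0 addNr shear00.
have -> : (e2 * e1 = e1^-1 * (e1 * e2) ^+ 2 * e2^-1)%g.
  by rewrite expgS expg1 !mulgA mulVg mul1g mulgK.
by rewrite eta1_eta2_sqr mulg1 e1V e2V mulgA.
Qed.

Definition nf (k : nat) (e : bool) (a b : 'I_m) : {perm V} := (e1 ^+ k * e2 ^+ e * shear a b)%g.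

Definition nf_set : {set {perm V}} :=
  [set nf x.1.1 x.1.2 x.2.1 x.2.2 | x : 'I_n * bool * ('I_m * 'I_m)].

Lemma nf_false k a b : nf k false a b = (e1 ^+ k * shear a b)%g.
Proof. by rewrite /nf expg0 mulg1. Qed.

Lemma nf_true k a b : nf k true a b = (e1 ^+ k * e2 * shear a b)%g.
Proof. by rewrite /nf expg1. Qed.

Lemma mem_nf_set k e a b : nf k e a b \in nf_set.
Proof.
apply/imsetP; exists (Ordinal (ltn_pmod k (ltn0Sn q.+1)), e, (a, b)) => //.
by rewrite /nf /= expg_mod // eta1_expn.
Qed.

Lemma nf_set_mulr_eta1 x : x \in nf_set -> (x * e1)%g \in nf_set.
Proof.
case/imsetP => -[[k [|]] [a b]] _ ->; rewrite /= ?nf_true ?nf_false -mulgA shear_eta1 mulgA.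
  rewrite -(mulgA _ e2) eta2_eta1 !mulgA -expgD -!mulgA shearM !mulgA.
  by rewrite -nf_true mem_nf_set.
by rewrite -expgSr -nf_false mem_nf_set.
Qed.

Lemma nf_set_mulr_eta2 x : x \in nf_set -> (x * e2)%g \in nf_set.
Proof.
case/imsetP => -[[k [|]] [a b]] _ ->; rewrite /= ?nf_true ?nf_false -mulgA shear_eta2 mulgA.
  rewrite -(mulgA (e1 ^+ k)%g) -{1}[e2]expg1 -expgSr eta2_sqr -mulgA shearM add0r.
  by rewrite -nf_false mem_nf_set.
by rewrite -nf_true mem_nf_set.
Qed.

Local Notation H := (<<[set e1; e2]>>)%g.

Lemma eta1_in_H : e1 \in H.
Proof. by apply: mem_gen; rewrite !inE eqxx. Qed.

Lemma eta2_in_H : e2 \in H.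
Proof. by apply: mem_gen; rewrite !inE eqxx orbT. Qed.

Lemma shear_in_H a b : shear a b \in H.
Proof.
have s01_H : shear 0 1 \in H.
  by rewrite -[1]opprK -oppr0 -shearV -eta2_sqr groupV groupX ?eta2_in_H.
have s1N1_H : shear 1 (-1) \in H.
  have -> : shear 1 (-1) = (e1^-1 * (shear 0 1 * e1))%g.
    by rewrite shear_eta1 mulKg subr0.
  by rewrite !groupM ?groupV ?eta1_in_H.
have s10_H : shear 1 0 \in H.
  have -> : shear 1 0 = (shear 1 (-1) * shear 0 1)%g by rewrite shearM addr0 addNr.
  by rewrite groupM.
have -> : shear a b = (shear 1 0 ^+ a * shear 0 1 ^+ b)%g.
  by rewrite !shearX shearM !mul0rn addr0 add0r !natr_Zp.
by rewrite groupM ?groupX.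
Qed.

Lemma H_eq_nf_set : H = nf_set.
Proof.
apply/eqP; rewrite eqEsubset; apply/andP; split.
  apply: gen_subset_mulr_closed => [|x a x_nf_set].
    by rewrite -shear00 -[shear 0 0]mul1g -(expg0 e1) -nf_false mem_nf_set.
  by rewrite !inE => /orP[] /eqP ->; [apply: nf_set_mulr_eta1 | apply: nf_set_mulr_eta2].
apply/subsetP => _ /imsetP[x _ ->].
by rewrite !groupM ?groupX ?eta1_in_H ?eta2_in_H ?shear_in_H.
Qed.

Lemma nf_fst k e a b v : (nf k e a b v).1 = (-1) ^+ e * (v.1 + k%:R).
Proof. by rewrite !permM shearE eta2X_fst eta1X. Qed.

Lemma nf_inj :
  injective (fun x : 'I_n * bool * ('I_m * 'I_m) => nf x.1.1 x.1.2 x.2.1 x.2.2).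
Proof.
move=> [[k e] [a b]] [[k' e'] [a' b']] /= eq_nf.
have fst_at i := congr1 (fun f : {perm V} => (f (i, 0)).1) eq_nf.
move: (fst_at 0) (fst_at 1); rewrite /= !nf_fst !add0r !natr_Zp => eq_k.
rewrite !mulrDr eq_k => /addIr /=; rewrite !mulr1 => /(signZp_inj q_gt0) eq_e.
rewrite -{}eq_e in eq_nf eq_k *.
have {}eq_k : k = k' by apply: (can_inj (signrMK e)).
rewrite -{}eq_k in eq_nf *.
by case/shear_inj: (mulgI _ _ _ eq_nf) => -> ->.
Qed.

Lemma card_nf_set : #|nf_set| = (2 * m ^ 2 * n)%N.
Proof.
rewrite card_imset; last exact: nf_inj.
by rewrite !card_prod !card_ord card_bool; lia.
Qed.

Lemma order_eta1 : #[e1]%g = n.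
Proof.
apply/eqP; rewrite eqn_dvd order_dvdn eta1_expn eqxx /=.
have := congr1 (fun f : {perm V} => (f (0, 0)).1) (expg_order e1).
by rewrite /= eta1X perm1 /= add0r => /eqP; rewrite natZp_eq0.
Qed.

Lemma order_eta2 : #[e2]%g = (2 * m)%N.
Proof.
have e2_expM k : (e2 ^+ (2 * k))%g = shear 0 (- k%:R).
  by rewrite expgM eta2_sqr shearX mul0rn mulNrn.
apply/eqP; rewrite eqn_dvd order_dvdn e2_expM.
rewrite natZp_char oppr0 shear00 eqxx /=.
set o := #[e2]%g; have o_even : odd o = false.
  apply: (signZp_inj q_gt0); rewrite /= signr_odd.
  have := eta2X_fst o (1, 0); rewrite expg_order perm1 /= mulr1.
  by move <-.
have def_o : o = (2 * o./2)%N by rewrite -[LHS]odd_double_half o_even -mul2n.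
have := expg_order e2; rewrite -/o {1}def_o e2_expM -shear00.
case/shear_inj => _ /eqP; rewrite oppr_eq0 natZp_eq0 => m_dvd.
by rewrite def_o dvdn_pmul2l.
Qed.

Lemma order_eta1_eta2 : #[e1 * e2]%g = 2.
Proof.
apply: nt_prime_order => //; first exact: eta1_eta2_sqr.
apply/eqP => e12_1; have := congr1 (fun f : {perm V} => (f (0, 0)).1) e12_1.
by rewrite /= permM eta1E eta2E perm1 /= add0r => /eqP; rewrite oppr_eq0 oner_eq0.
Qed.

End Eta.

Theorem lemma5p6 (m s n : nat) :
  odd m -> 3 <= m -> ~~ odd s -> 0 < s -> ~~ (4 %| s) -> n = s * m ->
  [/\ #[eta1 n m]%g = n,
      #[eta2 n m]%g = 2 * m,
      #[(eta1 n m * eta2 n m)%g]%g = 2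
    & #|<<[set eta1 n m; eta2 n m]>>%g| = 2 * m ^ 2 * n].
Proof.
move=> _ m_ge3 s_even s_gt0 _ def_n.
have n_even : 2 %| n by rewrite def_n dvdn_mulr // dvdn2.
have m_dvd_half : m %| n %/ 2 by rewrite def_n mulnC -muln_divA ?dvdn2 // dvdn_mulr.
have n_gt1 : 1 < n by rewrite def_n; nia.
case: m {def_n} m_ge3 m_dvd_half => [|[|p]] // _ m_dvd_half.
case: n n_gt1 n_even m_dvd_half => [|[|q]] // _ n_even m_dvd_half.
split.
- exact: order_eta1.
- exact: order_eta2.
- exact: order_eta1_eta2.
- by rewrite H_eq_nf_set //; apply: card_nf_set.
Qed.
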